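(* If $w\in S_n$ is fireworks, then $\mathrm{rajcode}(w)=\mathrm{wt}(\overline{D(w)})$.
   Context: Permutations are written in one-line notation. The decreasing runs of $w$ are the maximal consecutive decreasing segments of the one-line notation; $w$ is fireworks if the initial elements of its decreasing runs occur in increasing order. The Rajchgot code $\mathrm{rajcode}(w)=(r_1,\ldots,r_n)$: for each $j$ choose an increasing subsequence of $w(j),\ldots,w(n)$ containing $w(j)$ of greatest length among such subsequences, and let $r_j$ be the number of terms omitted. The Rothe diagram is $D(w)=\{(i,j)\in[n]^2: i<w^{-1}(j),\ j<w(i)\}$ ($i$ is the row, $j$ the column). For a diagram $D\subseteq[n]^2$, its upper closure is $\overline{D}=\{(i,j): i\le i' \text{ for some } (i',j)\in D\}$, and $\mathrm{wt}(D)\in\mathbb{Z}^n$ has $i$-th entry the number of boxes of $D$ in row $i$. *)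

(* Permutations of [n] are elements of 'S_n = {perm 'I_n};
   positions and values are 0-based: the one-line notation of w is
   w(0) w(1) ... w(n-1). *)
From mathcomp Require Import all_boot all_order all_fingroup.
Set Implicit Arguments. Unset Strict Implicit. Unset Printing Implicit Defensive.

Definition run_start n (w : 'S_n) (i : 'I_n) : bool :=
  [|| val i == 0%N | [exists k : 'I_n, ((val k).+1 == val i) && (w k < w i)]].

Definition fireworks n (w : 'S_n) : bool :=
  [forall i : 'I_n, forall j : 'I_n,
     [&& run_start w i, run_start w j & i < j] ==> (w i < w j)].

(* S is (the set of positions of) an increasing subsequence of w(j),...,w(n-1)
   containing w(j) *)
Definition incr_from n (w : 'S_n) (j : 'I_n) (S : {set 'I_n}) : bool :=
  [&& j \in S, [forall a in S, j <= a] &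
      [forall a in S, forall b in S, (a < b) ==> (w a < w b)]].

Definition lis_from n (w : 'S_n) (j : 'I_n) : nat :=
  \max_(S : {set 'I_n} | incr_from w j S) #|S|.

(* r_j = number of terms of w(j),...,w(n-1) omitted *)
Definition rajcode n (w : 'S_n) : {ffun 'I_n -> nat} :=
  [ffun j : 'I_n => (n - val j) - lis_from w j].

(* Rothe diagram, (row, column) *)
Definition rothe n (w : 'S_n) : {set 'I_n * 'I_n} :=
  [set p : 'I_n * 'I_n | (p.1 < (w^-1)%g p.2) && (p.2 < w p.1)].

Definition upper_closure n (D : {set 'I_n * 'I_n}) : {set 'I_n * 'I_n} :=
  [set p : 'I_n * 'I_n | [exists i' : 'I_n, ((i', p.2) \in D) && (p.1 <= i')]].

Definition wt n (D : {set 'I_n * 'I_n}) : {ffun 'I_n -> nat} :=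
  [ffun i : 'I_n => #|[set p in D | p.1 == i]|].

(* For a permutation w and a position j, the records of w(j),...,w(n-1) (the
   k >= j such that w(k) exceeds every earlier w(i'), j <= i' < k) form an
   increasing subsequence starting at w(j).  When w is fireworks every run
   start after j is a record, so two terms of an increasing subsequence cannot
   share the last record at or before them: they would lie in one decreasing
   run.  Hence the records realise the longest increasing subsequence, and
   r_j counts the non-records k >= j, i.e. the k having some w(i') > w(k) with
   j <= i' < k.  These are exactly the columns w(k) carrying a box of D(w) in
   some row i' >= j, i.e. the boxes of row j of the upper closure. *)
From mathcomp Require Import all_boot all_order all_fingroup.
Set Implicit Arguments. Unset Strict Implicit. Unset Printing Implicit Defensive.

Lemma card_geq_ord n (i : 'I_n) : #|[set k : 'I_n | i <= k]| = n - i.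
Proof.
rewrite cardsE -sum1_card (eq_bigl (fun k : 'I_n => xpredT k && (i <= k))) //.
by rewrite -(big_geq_mkord i n xpredT (fun=> 1)) sum_nat_const_nat muln1.
Qed.

Section DecreasingRuns.
Variables (n : nat) (w : 'S_n).

Lemma leq_pred_not_run_start (p q : 'I_n) :
  (val p).+1 = val q -> ~~ run_start w q -> w q <= w p.
Proof.
move=> pq; rewrite /run_start negb_or => /andP[_ /existsP no_ascent].
by rewrite leqNgt; apply/negP => ltwpq; apply: no_ascent; exists p; rewrite pq eqxx.
Qed.

Lemma decreasing_run (p q : 'I_n) : p <= q ->
  (forall r : 'I_n, p < r <= q -> ~~ run_start w r) -> w q <= w p.
Proof.
case: q => m; elim: m => [|m IH] ltmn /= le_pm no_start.
  by rewrite leqn0 in le_pm; rewrite (_ : p = Ordinal ltmn) //; apply/val_inj/eqP.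
have [eq_pm | lt_pm] := eqVneq (val p) m.+1.
  by rewrite (_ : p = Ordinal ltmn) //; apply/val_inj.
have le_pm' : p <= m by rewrite -ltnS ltn_neqAle lt_pm le_pm.
apply: (@leq_trans (w (Ordinal (ltnW ltmn)))).
  apply: leq_pred_not_run_start => //.
  by apply: no_start; rewrite ltnS le_pm' leqnn.
apply: IH => // r /andP[lt_pr le_rm]; apply: no_start.
by rewrite lt_pr (leq_trans le_rm).
Qed.

Hypothesis fw : fireworks w.

Lemma fireworksP (i j : 'I_n) :
  run_start w i -> run_start w j -> i < j -> w i < w j.
Proof. by move=> si sj ij; move/forallP: fw => /(_ i)/forallP/(_ j); rewrite si sj ij. Qed.

(* w(i) is at most the first value of its decreasing run, which precedes p. *)
Lemma lt_run_start (i p : 'I_n) : i < p -> run_start w p -> w i < w p.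
Proof.
case: i => m; elim: m => [|m IH] ltmn lt_mp sp.
  by apply: fireworksP.
have [si | nsi] := boolP (run_start w (Ordinal ltmn)); first exact: fireworksP.
apply: leq_ltn_trans (leq_pred_not_run_start (p := Ordinal (ltnW ltmn)) _ nsi) _ => //.
exact: IH (ltnW lt_mp) sp.
Qed.

End DecreasingRuns.

Section Records.
Variables (n : nat) (w : 'S_n).

Definition records (i : 'I_n) : {set 'I_n} :=
  [set k : 'I_n | (i <= k) && [forall i' : 'I_n, (i <= i' < k) ==> (w i' < w k)]].

Lemma recordsP (i k : 'I_n) :
  reflect (i <= k /\ forall i' : 'I_n, i <= i' -> i' < k -> w i' < w k)
          (k \in records i).
Proof.
rewrite inE; apply: (iffP andP) => [[ik /forallP max_k] | [ik max_k]]; split => //.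
  by move=> i' ii' i'k; have := implyP (max_k i'); rewrite ii' i'k; apply.
by apply/forallP => i'; apply/implyP => /andP[]; apply: max_k.
Qed.

Lemma mem_records (i : 'I_n) : i \in records i.
Proof. by apply/recordsP; split => // i' ii' i'i; move: (leq_trans i'i ii'); rewrite ltnn. Qed.

Lemma records_incr_from (i : 'I_n) : incr_from w i (records i).
Proof.
apply/and3P; split; first exact: mem_records.
  by apply/forall_inP => k /recordsP[].
apply/forall_inP => a /recordsP[ia _]; apply/forall_inP => b /recordsP[_ max_b].
by apply/implyP; apply: max_b.
Qed.

Lemma card_records_leq_lis (i : 'I_n) : #|records i| <= lis_from w i.
Proof. exact: leq_bigmax_cond (records_incr_from i). Qed.

Lemma setD_records (i : 'I_n) :
  [set k : 'I_n | i <= k] :\: records i =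
  [set k : 'I_n | [exists i' : 'I_n, [&& i <= i', i' < k & w k < w i']]].
Proof.
apply/setP => k; rewrite !inE andbC; apply/andP/existsP => [[ik] | [i' /and3P[ii' i'k lt_wk]]].
  rewrite ik negb_forall => /existsP[i']; rewrite negb_imply -leqNgt.
  move=> /andP[/andP[ii' i'k] le_wki']; exists i'; rewrite ii' i'k ltn_neqAle le_wki' andbT.
  by rewrite /= (inj_eq val_inj) (inj_eq perm_inj) neq_ltn i'k orbT.
split; first exact: leq_trans (ltnW i'k).
apply/negP => /andP[_ /forallP/(_ i')]; rewrite ii' i'k /=.
by move/(ltn_trans lt_wk); rewrite ltnn.
Qed.

Definition last_record (i a : 'I_n) : 'I_n :=
  [arg max_(k > i | (k \in records i) && (k <= a)) k]%N.

Lemma last_recordP (i a : 'I_n) : i <= a ->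
  [/\ last_record i a \in records i, last_record i a <= a &
      forall k, k \in records i -> k <= a -> k <= last_record i a].
Proof.
move=> ia; rewrite /last_record.
case: arg_maxnP => [|k /andP[rec_k ka] max_k]; first by rewrite mem_records.
by split=> // k' rec_k' k'a; apply: max_k; rewrite rec_k' k'a.
Qed.

Hypothesis fw : fireworks w.

Lemma run_start_records (i r : 'I_n) : i < r -> run_start w r -> r \in records i.
Proof.
move=> ir sr; apply/recordsP; split; first exact: ltnW.
by move=> i' _ i'r; apply: lt_run_start.
Qed.

(* No run start lies in (a, b]: it would be a later record, still <= b. *)
Lemma eq_last_record_decreasing (i a b : 'I_n) : i <= a -> a <= b ->
  last_record i a = last_record i b -> w b <= w a.
Proof.
move=> ia ab same_last; have [_ la_a _] := last_recordP ia.
have [_ _ max_lb] := last_recordP (leq_trans ia ab).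
apply: decreasing_run => // r /andP[ar rb]; apply/negP => sr.
have ir : i < r by apply: leq_ltn_trans ar.
have := max_lb r (run_start_records ir sr) rb.
rewrite -same_last => le_r_la.
by have := leq_ltn_trans (leq_trans le_r_la la_a) ar; rewrite ltnn.
Qed.

Lemma lis_leq_card_records (i : 'I_n) : lis_from w i <= #|records i|.
Proof.
apply/bigmax_leqP => S /and3P[_ /forall_inP geq_i /forall_inP incrS].
have incr a b : a \in S -> b \in S -> a < b -> w a < w b.
  by move=> aS bS; move/forall_inP: (incrS a aS) => /(_ b bS) /implyP.
have no_collision a b : a \in S -> b \in S -> a < b ->
    last_record i a = last_record i b -> False.
  move=> aS bS ab /(eq_last_record_decreasing (geq_i a aS) (ltnW ab)).
  by rewrite leqNgt incr.
rewrite -(card_in_imset (f := last_record i)).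
  apply/subset_leq_card/subsetP => _ /imsetP[a aS ->].
  by case: (last_recordP (geq_i a aS)).
move=> a b aS bS same_last; case: (ltngtP a b) => [ab | ba | /val_inj //].
  by case: (no_collision a b aS bS ab same_last).
by case: (no_collision b a bS aS ba (esym same_last)).
Qed.

Lemma lis_from_fireworks (i : 'I_n) : lis_from w i = #|records i|.
Proof. by apply/eqP; rewrite eqn_leq lis_leq_card_records card_records_leq_lis. Qed.

End Records.

Lemma wt_upper_closure_rothe n (w : 'S_n) (i : 'I_n) :
  wt (upper_closure (rothe w)) i =
  #|[set k : 'I_n | [exists i' : 'I_n, [&& i <= i', i' < k & w k < w i']]]|.
Proof.
rewrite ffunE -(card_imset _ (f := fun k => (i, w k))); last by move=> a b [] /perm_inj.
apply: eq_card => -[a j]; rewrite !inE /=.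
apply/andP/imsetP => [[/existsP[i' /andP[]]] | [k]].
  rewrite inE /= => /andP[i'_lt j_lt] ai' /eqP eq_ai; subst a.
  exists ((w^-1)%g j); last by rewrite permKV.
  by rewrite inE; apply/existsP; exists i'; rewrite ai' i'_lt permKV j_lt.
rewrite inE => /existsP[i' /and3P[ii' i'k lt_wk]] [-> ->]; split => //.
by apply/existsP; exists i'; rewrite ii' inE /= permK i'k lt_wk.
Qed.

Theorem lemma3p13 (n : nat) (w : 'S_n) :
  fireworks w -> rajcode w = wt (upper_closure (rothe w)).
Proof.
move=> fw; apply/ffunP => i.
have sub_geq : records w i \subset [set k : 'I_n | i <= k].
  by apply/subsetP => k /recordsP[ik _]; rewrite inE.
rewrite ffunE wt_upper_closure_rothe -setD_records (cardsDS sub_geq) card_geq_ord.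
by rewrite lis_from_fireworks.
Qed.
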